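(* Suppose $p\ge q$, $k=k'$, and $\Sigma,\Lambda$ are positive definite. Let $\mu=\mathcal{N}(m_\mu,\Sigma)$ on $\mathbb{R}^p$ and $\nu=\mathcal{N}(m_\nu,\Lambda)$ on $\mathbb{R}^q$. Let $T_{E,F}\in\mathbb{R}^{k\times k}$ be an optimal map for the Gaussian-restricted GW problem between $\mathcal{N}(0,\Sigma_E)$ and $\mathcal{N}(0,\Lambda_F)$ of the form ( * ), and let $T_{E^\perp,F^\perp|E,F}\in\mathbb{R}^{(q-k)\times(p-k)}$ be an optimal map of the form ( * ) for the Gaussian-restricted GW problem between $\mathcal{N}(0,\Sigma/\Sigma_E)$ and $\mathcal{N}(0,\Lambda/\Lambda_F)$. Then $T_{E,F}$ is invertible, and with $$C=\big(\Lambda_{F^\perp F}(T_{E,F}^T)^{-1}-T_{E^\perp,F^\perp|E,F}\Sigma_{E^\perp E}\big)\Sigma_E^{-1},\qquad B=\begin{pmatrix}T_{E,F}&0\\ C&T_{E^\perp,F^\perp|E,F}\end{pmatrix}\in\mathbb{R}^{q\times p},$$ the map $T_{\mathrm{MK}}(x)=m_\nu+B(x-m_\mu)$ satisfies $B\Sigma B^T=\Lambda$ (so $(T_{\mathrm{MK}})_\#\mu=\nu$), and $(\mathrm{Id},T_{\mathrm{MK}})_\#\mu$ is a Monge–Knothe plan for the Gaussian-restricted GW problem: its projection onto $E\times F$ is the optimal plan $(\mathrm{Id},T_{E,F})$ between the centered projections (translated by the means), and for $\mu_E$-a.e. $x_E$ the map $x_{E^\perp}\mapsto (m_\nu)_{F^\perp}+C(x_E-(m_\mu)_E)+T_{E^\perp,F^\perp|E,F}(x_{E^\perp}-(m_\mu)_{E^\perp})$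 pushes the conditional law $\mu_{E^\perp|E}(x_E,\cdot)$ onto the conditional law $\nu_{F^\perp|F}(y_F,\cdot)$ at $y_F=(m_\nu)_F+T_{E,F}(x_E-(m_\mu)_E)$, and coincides, up to translations, with the optimal map $T_{E^\perp,F^\perp|E,F}$ between these conditional laws.
   Context: $E\subset\mathbb{R}^p$ is a $k$-dimensional subspace and $F\subset\mathbb{R}^q$ a $k'$-dimensional subspace. Vectors and matrices are written in orthonormal bases of $E\oplus E^\perp$ and $F\oplus F^\perp$, so $x=(x_E,x_{E^\perp})$, $\Sigma=\begin{pmatrix}\Sigma_E&\Sigma_{EE^\perp}\\ \Sigma_{E^\perp E}&\Sigma_{E^\perp}\end{pmatrix}$ and similarly for $\Lambda$ with blocks $\Lambda_F,\Lambda_{FF^\perp},\Lambda_{F^\perp F},\Lambda_{F^\perp}$. The Schur complement is $\Sigma/\Sigma_E=\Sigma_{E^\perp}-\Sigma_{EE^\perp}^T\Sigma_E^{-1}\Sigma_{EE^\perp}$ (similarly $\Lambda/\Lambda_F$); it is the covariance of the Gaussian conditional law of $x_{E^\perp}$ given $x_E$. The Gaussian-restricted GW problem between Gaussians $\alpha$ on $\mathbb{R}^a$ and $\beta$ on $\mathbb{R}^b$ is $\inf\iint(\|x-x'\|_2^2-\|y-y'\|_2^2)^2\,\mathrm{d}\gamma(x,y)\mathrm{d}\gamma(x',y')$ over couplings $\gamma$ of $\alpha,\beta$ that are Gaussian on $\mathbb{R}^{a+b}$. Form ( * ): for $\alpha=\mathcal{N}(m_\alpha,\Sigma_\alpha)$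 on $\mathbb{R}^a$, $\beta=\mathcal{N}(m_\beta,\Sigma_\beta)$ on $\mathbb{R}^b$ with $a\ge b$, diagonalizations $\Sigma_\alpha=P_\alpha D_\alpha P_\alpha^T$, $\Sigma_\beta=P_\beta D_\beta P_\beta^T$ (eigenvalues in decreasing order), a map of form ( * ) is $T(x)=m_\beta+P_\beta A P_\alpha^T(x-m_\alpha)$ with $A=\begin{pmatrix}\tilde I_b D_\beta^{1/2}(D_\alpha^{(b)})^{-1/2}&0_{b,a-b}\end{pmatrix}$, where $D_\alpha^{(b)}$ is the top-left $b\times b$ block of $D_\alpha$ and $\tilde I_b=\mathrm{diag}((\pm1)_{i\le b})$. (Centered maps of form ( * ) are identified with their matrices.) *)

From HB Require Import structures.
From mathcomp Require Import all_boot all_order all_algebra.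
Set Implicit Arguments. Unset Strict Implicit. Unset Printing Implicit Defensive.
Import Order.TTheory GRing.Theory Num.Theory.
Local Open Scope ring_scope.

Section Defs.
Variable R : rcfType.

Definition posdef n (M : 'M[R]_n) : Prop :=
  M^T = M /\ forall v : 'cV[R]_n, v != 0 -> 0 < (v^T *m M *m v) ord0 ord0.
Definition psd n (M : 'M[R]_n) : Prop :=
  M^T = M /\ forall v : 'cV[R]_n, 0 <= (v^T *m M *m v) ord0 ord0.

(* Gaussian law N(m, S) on R^n, represented by its parameters *)
Record gauss (n : nat) := Gauss { gmean : 'cV[R]_n ; gcov : 'M[R]_n }.

(* push-forward of N(m,S) by the affine map x |-> c + M x : N(c + M m, M S M^T) *)
Definition gpush n m (c : 'cV[R]_m) (M : 'M[R]_(m, n)) (a : gauss n) : gauss m :=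
  Gauss (c + M *m gmean a) (M *m gcov a *m M^T).

(* the plan (Id, x |-> c + M x)_# a on R^(n+m) *)
Definition plan_of n m (a : gauss n) (c : 'cV[R]_m) (M : 'M[R]_(m, n)) : gauss (n + m) :=
  gpush (col_mx 0 c) (col_mx 1%:M M) a.

Definition gauss_coupling a b (al : gauss a) (be : gauss b) (g : gauss (a + b)) : Prop :=
  psd (gcov g) /\ usubmx (gmean g) = gmean al /\ dsubmx (gmean g) = gmean be /\
  ulsubmx (gcov g) = gcov al /\ drsubmx (gcov g) = gcov be.

(* GW cost  iint (|x-x'|^2 - |y-y'|^2)^2 dg dg  of a Gaussian g on R^(a+b),
   computed in closed form from its covariance (Isserlis' formula) *)
Definition gw_cost a b (g : gauss (a + b)) : R :=
  let G11 := ulsubmx (gcov g) in let G12 := ursubmx (gcov g) in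
  let G22 := drsubmx (gcov g) in
  4 * ((\tr G11) ^+ 2 + 2 * \tr (G11 *m G11) + (\tr G22) ^+ 2 + 2 * \tr (G22 *m G22)
       - 2 * \tr G11 * \tr G22 - 4 * \tr (G12 *m G12^T)).

Definition gw_optimal_plan a b (al : gauss a) (be : gauss b) (g : gauss (a + b)) : Prop :=
  gauss_coupling al be g /\
  forall g' : gauss (a + b), gauss_coupling al be g' -> gw_cost g <= gw_cost g'.

Definition gw_optimal_map a b (al : gauss a) (be : gauss b)
  (c : 'cV[R]_b) (M : 'M[R]_(b, a)) : Prop :=
  gw_optimal_plan al be (plan_of al c M).

(* T (centered, identified with its matrix) is of form ( * ) between N(0,Sa), N(0,Sb) *)
Definition form_star a b (Sa : 'M[R]_a) (Sb : 'M[R]_b) (T : 'M[R]_(b, a)) : Prop :=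
  (b <= a)%N /\
  exists (Pa : 'M[R]_a) (da : 'I_a -> R) (Pb : 'M[R]_b) (db : 'I_b -> R) (s : 'I_b -> R),
    Pa *m Pa^T = 1%:M /\ Pb *m Pb^T = 1%:M /\
        Sa = Pa *m diag_mx (\row_i da i) *m Pa^T /\
        Sb = Pb *m diag_mx (\row_i db i) *m Pb^T /\
        (forall i j : 'I_a, (i <= j)%N -> da j <= da i) /\
        (forall i j : 'I_b, (i <= j)%N -> db j <= db i) /\
        (forall i, s i = 1 \/ s i = -1) /\
        T = Pb *m (\matrix_(i < b, j < a)
                     if (i : nat) == j then s i * Num.sqrt (db i / da j) else 0)
              *m Pa^T.

(* Schur complement S / S_E for S written in the basis E (+) E^perp *)
Definition schur k n (S : 'M[R]_(k + n)) : 'M[R]_n :=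
  drsubmx S - (ursubmx S)^T *m invmx (ulsubmx S) *m ursubmx S.

Definition cond_law k n (m : 'cV[R]_(k + n)) (S : 'M[R]_(k + n)) (xE : 'cV[R]_k) : gauss n :=
  Gauss (dsubmx m + dlsubmx S *m invmx (ulsubmx S) *m (xE - usubmx m)) (schur S).

Definition projEF k p' q' : 'M[R]_(k + k, (k + p') + (k + q')) :=
  block_mx (row_mx 1%:M 0) 0 0 (row_mx 1%:M 0).

End Defs.

From HB Require Import structures.
From mathcomp Require Import all_boot all_order all_algebra ring.
Set Implicit Arguments. Unset Strict Implicit. Unset Printing Implicit Defensive.
Import Order.TTheory GRing.Theory Num.Theory.
Local Open Scope ring_scope.

(* Let K_Sigma := Sigma_{E^perp E} Sigma_E^{-1} be the regression matrix of x_{E^perp} on x_E.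
   The block LDL factorization Sigma = L_Sigma diag(Sigma_E, Sigma/Sigma_E) L_Sigma^T with
   L_Sigma = [1 0; K_Sigma 1], and likewise for Lambda, reduces everything to the diagonal
   blocks. Maps of form ( * ) transport covariances: T_EF Sigma_E T_EF^T = Lambda_F and
   T' (Sigma/Sigma_E) T'^T = Lambda/Lambda_F. Hence T_EF is invertible and
   C = K_Lambda T_EF - T' K_Sigma, which is exactly the choice making
   B L_Sigma = L_Lambda diag(T_EF, T'), whence B Sigma B^T = Lambda. The same identity
   C + T' K_Sigma = K_Lambda T_EF says that B maps conditional means to conditional means.
   Finally the GW cost only sees covariances, so optimality of the centered maps carries
   over to their translates. *)

Section BlockMatrices.
Variable R : rcfType.

Lemma mul_row10_mx m n p (A : 'M[R]_(m + n, p)) : row_mx 1%:M 0 *m A = usubmx A.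
Proof. by rewrite -{1}[A]vsubmxK mul_row_col mul1mx mul0mx addr0. Qed.

Lemma mul_row10_mx_tr m n m' n' (A : 'M[R]_(m + n, m' + n')) :
  row_mx 1%:M 0 *m A *m (row_mx 1%:M 0)^T = ulsubmx A.
Proof.
rewrite mul_row10_mx tr_row_mx trmx1 trmx0 -[usubmx A]hsubmxK mul_row_col.
by rewrite mulmx1 mulmx0 addr0.
Qed.

Lemma mul_lblock_col m1 m2 n1 n2 p (A : 'M[R]_(m1, n1)) (C : 'M[R]_(m2, n1))
    (D : 'M[R]_(m2, n2)) (x : 'M[R]_(n1 + n2, p)) :
  block_mx A 0 C D *m x = col_mx (A *m usubmx x) (C *m usubmx x + D *m dsubmx x).
Proof. by rewrite -{1}[x]vsubmxK mul_block_col mul0mx addr0. Qed.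

End BlockMatrices.

Section PositiveDefinite.
Variable R : rcfType.

Lemma posdef_psd n (M : 'M[R]_n) : posdef M -> psd M.
Proof.
case=> Msym Mpos; split=> // v; have [->|v0] := eqVneq v 0.
  by rewrite mulmx0 mxE.
exact/ltW/Mpos.
Qed.

Lemma posdef_unitmx n (M : 'M[R]_n) : posdef M -> M \in unitmx.
Proof.
case=> _ Mpos; rewrite unitmxE unitfE; apply/negP => /det0P [v v0 vM].
have := Mpos v^T; rewrite trmx_eq0 v0 => /(_ isT).
by rewrite trmxK vM mul0mx mxE ltxx.
Qed.

Lemma posdef_congr m n (P : 'M[R]_(m, n)) (M : 'M[R]_n) :
  posdef M -> row_free P -> posdef (P *m M *m P^T).
Proof.
case=> Msym Mpos Pfree; split; first by rewrite !trmx_mul trmxK Msym mulmxA.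
move=> v v0; have Ptv0 : P^T *m v != 0.
  apply: contra v0 => /eqP Ptv; rewrite -trmx_eq0; apply/eqP/(row_free_inj Pfree).
  by rewrite mul0mx -[_ *m P]trmxK trmx_mul trmxK Ptv trmx0.
by have := Mpos _ Ptv0; rewrite trmx_mul trmxK !mulmxA.
Qed.

Lemma posdef_ulsubmx k n (M : 'M[R]_(k + n)) : posdef M -> posdef (ulsubmx M).
Proof.
move=> PM; rewrite -mul_row10_mx_tr; apply: posdef_congr => //.
by apply/row_freeP; exists (col_mx 1%:M 0); rewrite mul_row_col mulmx1 mul0mx addr0.
Qed.

End PositiveDefinite.

Definition regmx (R : rcfType) k n (M : 'M[R]_(k + n)) : 'M[R]_(n, k) :=
  dlsubmx M *m invmx (ulsubmx M).

Section SymmetricBlocks.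
Variables (R : rcfType) (k n : nat) (M : 'M[R]_(k + n)).
Hypotheses (Msym : M^T = M) (Mul : ulsubmx M \in unitmx).

Lemma sym_dlsubmx : dlsubmx M = (ursubmx M)^T.
Proof. by rewrite trmx_ursub Msym. Qed.

Lemma regmx_mul_ulsubmx : regmx M *m ulsubmx M = dlsubmx M.
Proof. exact: mulmxKV. Qed.

Lemma ulsubmx_mul_tr_regmx : ulsubmx M *m (regmx M)^T = ursubmx M.
Proof.
by rewrite trmx_mul trmx_inv trmx_ulsub Msym sym_dlsubmx trmxK mulKVmx.
Qed.

Lemma schur_regmx : schur M = drsubmx M - regmx M *m ursubmx M.
Proof. by rewrite /schur -sym_dlsubmx. Qed.

Lemma schur_congr :
  row_mx (- regmx M) 1%:M *m M *m (row_mx (- regmx M) 1%:M)^T = schur M.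
Proof.
rewrite -{2}[M]submxK mul_row_block !mulNmx regmx_mul_ulsubmx !mul1mx addNr.
by rewrite tr_row_mx trmx1 mul_row_col mul0mx add0r mulmx1 addrC -schur_regmx.
Qed.

Lemma block_ldl :
  M = block_mx 1%:M 0 (regmx M) 1%:M *m block_mx (ulsubmx M) 0 0 (schur M)
        *m (block_mx 1%:M 0 (regmx M) 1%:M)^T.
Proof.
rewrite tr_block_mx !trmx1 trmx0 !mulmx_block !(mulmx0, mul0mx, mulmx1, mul1mx).
rewrite !(addr0, add0r) regmx_mul_ulsubmx ulsubmx_mul_tr_regmx.
rewrite -regmx_mul_ulsubmx -mulmxA ulsubmx_mul_tr_regmx schur_regmx addrC subrK.
by rewrite regmx_mul_ulsubmx submxK.
Qed.

End SymmetricBlocks.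

Lemma posdef_schur (R : rcfType) k n (M : 'M[R]_(k + n)) : posdef M -> posdef (schur M).
Proof.
move=> PM; have Mul := posdef_unitmx (posdef_ulsubmx PM).
rewrite -(schur_congr PM.1 Mul); apply: posdef_congr => //.
by apply/row_freeP; exists (col_mx 0 1%:M); rewrite mul_row_col mulmx0 mulmx1 add0r.
Qed.

Section FormStar.
Variable R : rcfType.

Lemma mulmx_tr_diag n (P X : 'M[R]_n) l :
  (P^T *m X *m P) l l = ((col l P)^T *m X *m col l P) 0 0.
Proof.
transitivity (row l (col l (P^T *m X *m P)) 0 0); first by rewrite !mxE.
by rewrite colE -!mulmxA -colE row_mul tr_col mulmxA.
Qed.

Section Orthodiag.
Variables (n : nat) (P S : 'M[R]_n) (d : 'I_n -> R).
Hypotheses (Portho : P *m P^T = 1%:M) (Sdiag : S = P *m diag_mx (\row_i d i) *m P^T).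

Lemma orthodiag_eigenvalue l : d l = ((col l P)^T *m S *m col l P) 0 0.
Proof.
have PtP : P^T *m P = 1%:M by apply: mulmx1C.
rewrite -mulmx_tr_diag Sdiag !mulmxA PtP mul1mx -mulmxA PtP mulmx1.
by rewrite mxE eqxx mulr1n mxE.
Qed.

Lemma orthodiag_col_neq0 l : col l P != 0.
Proof.
apply/negP => /eqP Pl0; have := mulmx_tr_diag P 1%:M l.
by rewrite mulmx1 (mulmx1C Portho) Pl0 mulmx0 !mxE eqxx => /eqP; rewrite oner_eq0.
Qed.

Lemma psd_eigen_ge0 l : psd S -> 0 <= d l.
Proof. by case=> _ Spos; rewrite orthodiag_eigenvalue. Qed.

Lemma posdef_eigen_gt0 l : posdef S -> 0 < d l.
Proof. by case=> _ Spos; rewrite orthodiag_eigenvalue Spos ?orthodiag_col_neq0. Qed.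

End Orthodiag.

Lemma star_mx_cov a b (hba : (b <= a)%N) (da : 'I_a -> R) (db : 'I_b -> R) (s : 'I_b -> R) :
  (forall j, 0 < da j) -> (forall i, 0 <= db i) -> (forall i, s i = 1 \/ s i = -1) ->
  let A := \matrix_(i < b, j < a) if (i : nat) == j then s i * Num.sqrt (db i / da j) else 0 in
  A *m diag_mx (\row_j da j) *m A^T = diag_mx (\row_i db i).
Proof.
move=> da_gt0 db_ge0 s_sign A; apply/matrixP => i j; rewrite mul_mx_diag !mxE.
rewrite (bigD1 (widen_ord hba i)) //= big1 ?addr0 => [|l il]; last first.
  rewrite !mxE; case: eqP => [il'|]; last by rewrite !mul0r.
  by case/eqP: il; apply/val_inj.
rewrite !mxE /= eqxx; have [<-|ij] := eqVneq i j; last first.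
  rewrite (_ : (j : nat) == i = false) ?mulr0 ?mulr0n //.
  by apply/negbTE; rewrite val_eqE eq_sym.
have s2 : s i * s i = 1 by case: (s_sign i) => ->; rewrite ?mulrNN mulr1.
have ratio_ge0 : 0 <= db i / da (widen_ord hba i) by rewrite divr_ge0 // ltW.
rewrite eqxx mulr1n; set q := Num.sqrt _; set dj := da _.
have -> : s i * q * dj * (s i * q) = s i * s i * q ^+ 2 * dj by ring.
by rewrite s2 mul1r sqr_sqrtr // divfK ?lt0r_neq0.
Qed.

Lemma form_star_cov a b (Sa : 'M[R]_a) (Sb : 'M[R]_b) (T : 'M[R]_(b, a)) :
  posdef Sa -> psd Sb -> form_star Sa Sb T -> T *m Sa *m T^T = Sb.
Proof.
move=> PSa PSb [hba [Pa [da [Pb [db [s [PaO [PbO [Sa_diag [Sb_diag [_ [_ [s_sign ->]]]]]]]]]]]]].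
have PtP : Pa^T *m Pa = 1%:M by apply: mulmx1C.
rewrite Sa_diag Sb_diag -(star_mx_cov hba (posdef_eigen_gt0 PaO Sa_diag ^~ PSa)
  (psd_eigen_ge0 PbO Sb_diag ^~ PSb) s_sign).
rewrite !trmx_mul !trmxK !mulmxA -(mulmxA _ Pa^T Pa) PtP mulmx1.
by rewrite -(mulmxA _ Pa^T Pa) PtP mulmx1.
Qed.

End FormStar.

Section GaussianPlans.
Variable R : rcfType.

Lemma gw_optimal_map_translate a b (Sa : 'M[R]_a) (Sb : 'M[R]_b) (T : 'M[R]_(b, a))
    (ma : 'cV[R]_a) (c : 'cV[R]_b) :
  gw_optimal_map (Gauss 0 Sa) (Gauss 0 Sb) 0 T ->
  gw_optimal_map (Gauss ma Sa) (Gauss (c + T *m ma) Sb) c T.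
Proof.
move=> [[g_psd [_ [_ [g_ul g_dr]]]] g_opt]; split.
  rewrite /gauss_coupling /= (mul_col_mx 1%:M T ma) add_col_mx col_mxKu col_mxKd.
  by rewrite add0r mul1mx.
move=> g' [g'_psd [_ [_ [g'_ul g'_dr]]]].
by apply: (g_opt (Gauss 0 (gcov g'))); rewrite /gauss_coupling /= !linear0.
Qed.

Lemma projEF_plan_of_lblock k p q (mu : gauss R (k + p)) (c : 'cV[R]_(k + q))
    (T : 'M[R]_k) (C : 'M[R]_(q, k)) (Tp : 'M[R]_(q, p)) :
  gpush 0 (projEF R k p q) (plan_of mu c (block_mx T 0 C Tp))
  = plan_of (Gauss (usubmx (gmean mu)) (ulsubmx (gcov mu))) (usubmx c) T.
Proof.
have Pc : projEF R k p q *m col_mx 0 c = col_mx 0 (usubmx c).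
  by rewrite mul_block_col !mul0mx mulmx0 !add0r mul_row10_mx.
have PB : projEF R k p q *m col_mx 1%:M (block_mx T 0 C Tp)
          = col_mx 1%:M T *m row_mx 1%:M 0.
  rewrite mul_block_col mulmx1 !mul0mx addr0 add0r mul_row10_mx.
  by rewrite mul_col_mx mul1mx mul_mx_row mulmx1 mulmx0 /block_mx col_mxKu.
case: mu => m S; rewrite /gpush /plan_of /=; congr Gauss.
  by rewrite add0r mulmxDr Pc mulmxA PB -mulmxA mul_row10_mx.
rewrite !mulmxA PB -(mulmxA _ _ (projEF R k p q)^T) -trmx_mul PB trmx_mul.
by rewrite -mul_row10_mx_tr !mulmxA.
Qed.

End GaussianPlans.

Section MongeKnothe.
Variables (R : rcfType) (k p q : nat) (S : 'M[R]_(k + p)) (L : 'M[R]_(k + q)).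
Variables (T : 'M[R]_k) (Tp : 'M[R]_(q, p)).
Hypotheses (Ssym : S^T = S) (Lsym : L^T = L).
Hypotheses (Sul : ulsubmx S \in unitmx) (Lul : ulsubmx L \in unitmx).
Hypothesis covE : T *m ulsubmx S *m T^T = ulsubmx L.

Lemma mk_offdiagE :
  T \in unitmx ->
  (dlsubmx L *m invmx T^T - Tp *m dlsubmx S) *m invmx (ulsubmx S)
  = regmx L *m T - Tp *m regmx S.
Proof.
move=> Tunit; rewrite mulmxBl -!mulmxA; congr (_ *m _ - _).
(* Lambda_F = T Sigma_E T^T gives Lambda_F^{-1} T = T^{-T} Sigma_E^{-1}. *)
rewrite -[LHS](mulKmx Lul); congr (_ *m _).
by rewrite mulmxA -covE mulmxK ?unitmx_tr // mulmxK.
Qed.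

Lemma mk_block_cov :
  Tp *m schur S *m Tp^T = schur L ->
  let B := block_mx T 0 (regmx L *m T - Tp *m regmx S) Tp in
  B *m S *m B^T = L.
Proof.
move=> covP B; set LS := block_mx 1%:M 0 (regmx S) 1%:M.
set LL := block_mx 1%:M 0 (regmx L) 1%:M; set D := block_mx T 0 0 Tp.
have B_LS : B *m LS = LL *m D.
  by rewrite !mulmx_block !(mulmx0, mul0mx, mulmx1, mul1mx, addr0, add0r) subrK.
have D_cov : D *m block_mx (ulsubmx S) 0 0 (schur S) *m D^T
             = block_mx (ulsubmx L) 0 0 (schur L).
  by rewrite tr_block_mx !trmx0 !mulmx_block !(mulmx0, mul0mx, addr0, add0r) covE covP.
rewrite {1}(block_ldl Ssym Sul) [RHS](block_ldl Lsym Lul) -/LS -/LL -D_cov.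
by rewrite !mulmxA B_LS -!mulmxA -trmx_mul B_LS trmx_mul !mulmxA.
Qed.

End MongeKnothe.

Theorem proposition3 (R : rcfType) (k p' q' : nat) (hpq : (q' <= p')%N)
  (Sigma : 'M[R]_(k + p')) (Lambda : 'M[R]_(k + q'))
  (mmu : 'cV[R]_(k + p')) (mnu : 'cV[R]_(k + q'))
  (TEF : 'M[R]_k) (Tp : 'M[R]_(q', p')) :
  posdef Sigma -> posdef Lambda ->
  form_star (ulsubmx Sigma) (ulsubmx Lambda) TEF ->
  gw_optimal_map (Gauss 0 (ulsubmx Sigma)) (Gauss 0 (ulsubmx Lambda)) 0 TEF ->
  form_star (schur Sigma) (schur Lambda) Tp ->
  gw_optimal_map (Gauss 0 (schur Sigma)) (Gauss 0 (schur Lambda)) 0 Tp ->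
  let C := (dlsubmx Lambda *m invmx TEF^T - Tp *m dlsubmx Sigma) *m invmx (ulsubmx Sigma) in
  let B : 'M[R]_(k + q', k + p') := block_mx TEF 0 C Tp in
  let mu := Gauss mmu Sigma in
  let nu := Gauss mnu Lambda in
  let muE := Gauss (usubmx mmu) (ulsubmx Sigma) in
  let nuF := Gauss (usubmx mnu) (ulsubmx Lambda) in
  let cEF := usubmx mnu - TEF *m usubmx mmu in
  [/\ TEF \in unitmx,
      B *m Sigma *m B^T = Lambda,
      gpush (mnu - B *m mmu) B mu = nu,
      (* projection of (Id, T_MK)_# mu onto E x F is the optimal plan (Id, T_EF) *)
      gpush 0 (projEF R k p' q') (plan_of mu (mnu - B *m mmu) B) = plan_of muE cEF TEF
        /\ gw_optimal_map muE nuF cEF TEF &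
      (* conditional part *)
      forall xE : 'cV[R]_k,
        let yF := usubmx mnu + TEF *m (xE - usubmx mmu) in
        let c := dsubmx mnu + C *m (xE - usubmx mmu) - Tp *m dsubmx mmu in
        [/\ forall x : 'cV[R]_(k + p'), usubmx x = xE ->
              dsubmx (mnu + B *m (x - mmu))
              = dsubmx mnu + C *m (xE - usubmx mmu) + Tp *m (dsubmx x - dsubmx mmu),
            forall xp : 'cV[R]_p',
              dsubmx mnu + C *m (xE - usubmx mmu) + Tp *m (xp - dsubmx mmu) = c + Tp *m xp,
            gpush c Tp (cond_law mmu Sigma xE) = cond_law mnu Lambda yF &
            gw_optimal_map (cond_law mmu Sigma xE) (cond_law mnu Lambda yF) c Tp]].
Proof.
(* [hpq] is redundant: [form_star] already records [q' <= p']. *)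
move=> PS PL fsE optE fsP optP C B mu nu muE nuF cEF.
have [PSE PLF] := (posdef_ulsubmx PS, posdef_ulsubmx PL).
have [Sul Lul] := (posdef_unitmx PSE, posdef_unitmx PLF).
have covE := form_star_cov PSE (posdef_psd PLF) fsE.
have covP := form_star_cov (posdef_schur PS) (posdef_psd (posdef_schur PL)) fsP.
have Tunit : TEF \in unitmx.
  by move: Lul; rewrite -covE !unitmx_mul => /andP[/andP[]].
have CE : C = regmx Lambda *m TEF - Tp *m regmx Sigma by apply: mk_offdiagE.
have covB : B *m Sigma *m B^T = Lambda.
  by rewrite /B CE; exact: (mk_block_cov PS.1 PL.1 Sul Lul covE covP).
have cEFE : usubmx (mnu - B *m mmu) = cEF.
  by rewrite /B mul_lblock_col linearB /= col_mxKu.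
split=> //.
- by rewrite /gpush /= covB subrK.
- split; first by rewrite projEF_plan_of_lblock cEFE.
  by rewrite /nuF -[usubmx mnu](subrK (TEF *m usubmx mmu)); apply: gw_optimal_map_translate.
move=> xE yF c.
have cond_meanE : dsubmx mnu + regmx Lambda *m (yF - usubmx mnu)
                  = c + Tp *m (dsubmx mmu + regmx Sigma *m (xE - usubmx mmu)).
  have yFE : yF - usubmx mnu = TEF *m (xE - usubmx mmu) by rewrite /yF addrC addKr.
  rewrite yFE /c (mulmxDr Tp) addrA subrK -addrA !(mulmxA (regmx _)) (mulmxA Tp).
  by rewrite -mulmxDl CE subrK.
split.
- move=> x xE_x; rewrite /B mul_lblock_col linearD /= col_mxKd !linearB /= xE_x.
  by rewrite addrA.
- by move=> xp; rewrite (mulmxBr Tp) addrA addrAC.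
- by rewrite /gpush /cond_law /= -cond_meanE covP.
by rewrite /cond_law cond_meanE; apply: gw_optimal_map_translate.
Qed.
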